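(* Let $x<y$ be real numbers and $t\ge s\ge 0$ with $s\ge r(x)\vee r(y)$. Then (i) for any (possibly random) time $\varsigma$, $$\{X_\varsigma\in(x,y),\ \tau\ge\varsigma\ge t\}\subset\{X_s\in(x,y)\};$$ (ii) $\mu[(x,y)]\le\mu_t[(x,y)]$.
   Context: Standing setting. $(\Omega,\mathcal F,\mathbb P)$ is a complete probability space supporting a standard Brownian motion $W$ and an independent random variable $X_0\sim\mu_0$. The function $\sigma:[0,\infty)\times\mathbb R\to\mathbb R$ satisfies, for some $k\ge0$, $|\sigma(t,x)-\sigma(t,y)|\le k|x-y|$ and $|\sigma(t,x)|\le k(1+|x|)$ for all $t\ge0$, $x,y\in\mathbb R$; $X$ is the unique strong (Markov) solution of $\mathrm dX_t=\sigma(t,X_t)\,\mathrm dW_t$ with initial condition $X_0$. There is an open set $\mathcal O\subset\mathbb R$ such that $\sigma$ is bounded away from zero on $[0,\infty)\times K$ for every compact $K\subset\mathcal O$, $\sigma$ is $C^{1,2}$ on $[0,\infty)\times\mathcal O$, and $X$ and $\mu_0$ take values in $\mathcal O$. $\mu$ is a probability measure on $\mathcal O$ with $u_{\mu_0}(x)\ge u_\mu(x)>-\infty$ for all $x$, where $u_\nu(x)=-\int_{\mathbb R}|x-y|\,\mathrm d\nu(y)$. A Root barrier is a lower semicontinuous $r:[-\infty,\infty]\to[0,\infty]$ with $r(\pm\infty)=0$ such that $\tau=\inf\{t\ge0: t\ge r(X_t)\}$ satisfies $X_\tau\sim\mu$ and $(X_{t\wedge\tau})_{t\ge0}$ is uniformly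 integrable; $r$ is assumed to be such a barrier and regular, i.e. $u_{\mu_0}(x)=u_\mu(x)$ implies $r(x)=0$ (equivalently $r$ vanishes outside $\mathcal I=\{x: u_{\mu_0}(x)\ne u_\mu(x)\}$). For $t\ge0$ and Borel $A$, $\mu_t[A]=\mathbb P[X_{t\wedge\tau}\in A]$. *)

From HB Require Import structures.
From mathcomp Require Import all_boot all_order all_algebra.
From mathcomp Require Import all_classical all_reals all_analysis.
Set Implicit Arguments. Unset Strict Implicit. Unset Printing Implicit Defensive.
Import Order.TTheory GRing.Theory Num.Theory.
Import numFieldNormedType.Exports.
Local Open Scope classical_set_scope.
Local Open Scope ring_scope.
Local Open Scope ereal_scope.

(* Root stopping time: tau = inf { t >= 0 : t >= r(X_t) } (inf of empty set = +oo). *)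
Definition root_time (R : realType) (Omega : Type) (X : R -> Omega -> R)
  (r : \bar R -> \bar R) (w : Omega) : \bar R :=
  ereal_inf [set t%:E | t in [set t : R | (0 <= t)%R /\ r (X t w)%:E <= t%:E]].

Definition stopped (R : realType) (Omega : Type) (X : R -> Omega -> R)
  (tau : Omega -> \bar R) (t : R) (w : Omega) : R :=
  if t%:E <= tau w then X t w else X (fine (tau w)) w.

Definition potential (R : realType) (nu : set R -> \bar R) (x : R) : \bar R :=
  - \int[nu]_y (`|x - y|%R)%:E.

Definition unif_integrable (R : realType) d (Omega : measurableType d)
  (P : probability Omega R) (Y : R -> Omega -> R) : Prop :=
  forall e : R, (0 < e)%R -> exists K : R, forall t : R, (0 <= t)%R ->
    \int[P]_(w in [set w | (K < `|Y t w|)%R]) (`|Y t w|)%:E < e%:E.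

Definition mu_t (R : realType) d (Omega : measurableType d)
  (P : probability Omega R) (X : R -> Omega -> R) (tau : Omega -> \bar R)
  (t : R) (A : set R) : \bar R :=
  P [set w | A (stopped X tau t w)].

From HB Require Import structures.
From mathcomp Require Import all_boot all_order all_algebra.
From mathcomp Require Import all_classical all_reals all_analysis.
From mathcomp Require Import lra measurable_realfun.
Import Order.TTheory GRing.Theory Num.Theory.
Import numFieldNormedType.Exports.
Local Open Scope classical_set_scope.
Local Open Scope ring_scope.

(* If X_v lies in (x,y) at some v <= tau with v >= s, but
   X_s does not, the intermediate value theorem yields c in [s,v) with X_c = x
   or X_c = y; since r(x), r(y) <= s <= c, the barrier is hit at time c, so
   tau <= c < v, a contradiction (lemma stays_in_interval).

   (ii) compares the laws of X_tau (which is mu) and of X_{t /\ tau}.  By (i),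
   and by the convergence X_u -> X_tau when tau = +oo, the event
   {X_tau in (x,y)} is contained, up to a null set, in {X_{t /\ tau} in (x,y)}
   (lemma stopped_in_interval).  To compare probabilities the latter event must
   be measurable, which reduces to the measurability of {t <= tau}.  This is
   the only delicate point: tau is an infimum over uncountably many times.  We
   show that "the path stays strictly before the barrier on [0,c]" is
   equivalent, by compactness of [0,c], lower semicontinuity of r and
   continuity of the paths, to a countable condition at rational times
   involving open thickenings of the barrier (avoids_barrierE). *)

Section paths.
Context {R : realType}.

Lemma near_continuous_nonneg {f : R -> R} :
  {within [set t : R | 0 <= t], continuous f} ->
  forall u : R, 0 <= u -> forall e : R, 0 < e ->
  \forall v \near u, 0 <= v -> `|f u - f v| < e.
Proof.
move=> fc u u0 e e0.
by have /cvgrPdist_lt/(_ e e0) := (subspace_continuousP _ _).1 fc u u0.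
Qed.

Lemma continuous_within_itv {f : R -> R} {a : R} (b : R) : 0 <= a ->
  {within [set t : R | 0 <= t], continuous f} -> {within `[a, b], continuous f}.
Proof.
move=> a0 fc; apply/subspace_continuousP => u; rewrite /= in_itv /= => /andP[au _].
apply/cvgrPdist_lt => e e0.
have := near_continuous_nonneg fc _ (le_trans a0 au) _ e0.
apply: filter_app; near=> v => H.
by rewrite /= in_itv /= => /andP[av _]; apply: H; exact: le_trans a0 av.
Unshelve. all: by end_near. Qed.

Lemma ivt_exit {f : R -> R} {s v : R} (x y : R) : s <= v ->
  {within `[s, v], continuous f} -> f v \in `]x, y[ -> f s \notin `]x, y[ ->
  exists2 c, s <= c < v & f c = x \/ f c = y.
Proof.
move=> sv fc; rewrite !in_itv /= => /andP[xv vy].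
rewrite negb_and -!leNgt => fs_out.
have [z zx zf] : exists2 z, z = x \/ z = y &
    Num.min (f s) (f v) <= z <= Num.max (f s) (f v).
  case/orP: fs_out => [sx|ys]; [exists x; first by left|exists y; first by right].
    by rewrite ge_min sx le_max (ltW xv) orbT.
  by rewrite ge_min (ltW vy) orbT le_max ys.
have [c] := IVT sv fc zf; rewrite in_itv /= => /andP[sc cv] fcz.
exists c; last by case: zx => <-; [left|right].
rewrite sc lt_neqAle cv andbT; apply/eqP => cv_eq; move: fcz; rewrite cv_eq.
by case: zx => -> fvz; move: xv vy; rewrite fvz ltxx.
Qed.

Lemma rat_approx {u c d : R} : 0 <= u <= c -> 0 < d ->
  exists q : rat, 0 <= (ratr q : R) <= c /\ `|u - ratr q| < d.
Proof.
move=> /andP[u0 uc] d0; have [u_gt0|u_le0] := ltP 0 u; last first.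
  have -> : u = 0 by apply/eqP; rewrite eq_le u_le0 u0.
  by exists 0%R; rewrite rmorph0 lexx (le_trans u0 uc) subr0 normr0.
have /rat_in_itvoo[q] : Num.max (u - d) 0 < u by rewrite gt_max u_gt0 gtrBl d0.
rewrite in_itv /= gt_max => /andP[/andP[udq q0] qu].
exists q; rewrite (ltW q0) (le_trans (ltW qu) uc).
by rewrite ger0_norm ?subr_ge0 ?(ltW qu) //; lra.
Qed.

End paths.

Section root_time.
Context {R : realType} {Omega : Type} (X : R -> Omega -> R) (r : \bar R -> \bar R).
Local Notation tau := (root_time X r).

Lemma root_time_le {w : Omega} {u : R} : 0 <= u -> (r (X u w)%:E <= u%:E)%E -> (tau w <= u%:E)%E.
Proof. by move=> u0 ru; apply: ereal_inf_lbound; exists u. Qed.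

Lemma root_time_ge0 w : (0 <= tau w)%E.
Proof. by apply: le_ereal_inf_tmp => _ [u [u0 _] <-]; rewrite lee_fin. Qed.

Lemma root_time_geP w (t : R) :
  (t%:E <= tau w)%E <-> forall u, 0 <= u < t -> (u%:E < r (X u w)%:E)%E.
Proof.
split=> [tw u /andP[u0 ut]|Hw].
  rewrite ltNge; apply/negP => /(root_time_le u0)/(le_trans tw).
  by rewrite lee_fin leNgt ut.
apply: le_ereal_inf_tmp => _ [u [u0 ru] <-]; rewrite lee_fin leNgt.
by apply/negP => ut; move: (Hw u); rewrite u0 ut ltNge ru => /(_ isT).
Qed.

Lemma stays_in_interval {w : Omega} {x y s v : R} :
  {within [set t : R | 0 <= t], continuous (X ^~ w)} ->
  0 <= s -> s <= v -> (r x%:E <= s%:E)%E -> (r y%:E <= s%:E)%E ->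
  X v w \in `]x, y[ -> (v%:E <= tau w)%E -> X s w \in `]x, y[.
Proof.
move=> Xc s0 sv rx ry Xv vtau; apply: contraT => Xs.
have [c /andP[sc cv] Xc_end] := ivt_exit x y sv (continuous_within_itv v s0 Xc) Xv Xs.
have rc : (r (X c w)%:E <= c%:E)%E.
  by apply: le_trans (_ : s%:E <= c%:E)%E; [case: Xc_end => ->|rewrite lee_fin].
have := le_trans vtau (root_time_le (le_trans s0 sc) rc).
by rewrite lee_fin leNgt cv.
Qed.

End root_time.

Section barrier_neighbourhoods.
Context {R : realType} (r : \bar R -> \bar R).

(* The 1/(n+1)-thickening around time q of the barrier, seen as a set of
   space points: z is in it when it is 1/(n+1)-close to some z' with
   r(z') <= p for a time p that is 1/(n+1)-close to q. *)
Definition barrier_nbhd (q : R) (n : nat) : set R :=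
  \bigcup_(p in [set p : R * R | `|q - p.1| < n.+1%:R^-1 /\ (r p.2%:E <= p.1%:E)%E])
     ball p.2 n.+1%:R^-1.

Lemma open_barrier_nbhd q n : open (barrier_nbhd q n).
Proof. by apply: bigcup_open => p _; exact: ball_open. Qed.

Hypothesis rlsc : lower_semicontinuous r.

Lemma lsc_ball_bound (z u : R) : (u%:E < r z%:E)%E ->
  exists a e : R, [/\ u < a, 0 < e & forall z', ball z e z' -> (a%:E < r z'%:E)%E].
Proof.
move=> urz.
have [a ua arz] : exists2 a : R, u < a & (a%:E < r z%:E)%E.
  move: urz; case: (r z%:E) => [b||] //=; rewrite ?lte_fin => ub.
  - by exists ((u + b) / 2); rewrite ?lte_fin; lra.
  - by exists (u + 1); [rewrite ltrDl|rewrite ltry].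
have [V Vn Va] := rlsc _ _ arz.
have : \forall z' \near z, (a%:E < r z'%:E)%E.
  by apply: (nbhs_EFin (fun y => a%:E < r y)%E z).1; apply: filterS Vn.
by move=> /nbhs_ballP[e /= e0 eb]; exists a, e; split.
Qed.

Variable f : R -> R.
Hypothesis fcont : {within [set t : R | 0 <= t], continuous f}.

Definition avoids_barrier (c : R) : Prop :=
  forall u, 0 <= u <= c -> (u%:E < r (f u)%:E)%E.

Lemma barrier_nbhd_avoided_near {u : R} : 0 <= u -> (u%:E < r (f u)%:E)%E ->
  \forall v \near u & n \near \oo, 0 <= v -> ~ barrier_nbhd v n (f v).
Proof.
move=> u0 /lsc_ball_bound[a [e [ua e0 eb]]].
have e20 : 0 < e / 2 by rewrite divr_gt0.
have au0 : 0 < (a - u) / 2 by rewrite divr_gt0 // subr_gt0.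
have [d /= d0 db] := (nbhs_ballP _ _).1 (near_continuous_nonneg fcont u u0 _ e20).
have th0 : 0 < Num.min (e / 2) ((a - u) / 2) by rewrite lt_min e20 au0.
exists (ball u (Num.min d ((a - u) / 2)),
        [set n : nat | n.+1%:R^-1 < Num.min (e / 2) ((a - u) / 2)]).
  split; first by apply: nbhsx_ballx; rewrite lt_min d0 au0.
  exact: (@near_infty_natSinv_lt R (PosNum th0)).
move=> [v n] /= [+ +] v0 [[p1 p2] /= [vp1 rp] p2f].
rewrite /ball /= !lt_min => /andP[vd vau] /andP[ne nau].
have fuv : `|f u - f v| < e / 2 by apply: (db v) => //; rewrite /ball /=.
have /lt_le_trans/(_ rp) : (a%:E < r p2%:E)%E.
  apply: eb; rewrite /ball /= -[f u](subrK (f v)) -addrA.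
  apply: (le_lt_trans (ler_normD _ _)).
  by rewrite (splitr e) ltrD // distrC (lt_trans p2f ne).
rewrite lte_fin => ap1.
have vu : v - u < (a - u) / 2 by rewrite (le_lt_trans _ vau) // distrC ler_norm.
have p1v : p1 - v < (a - u) / 2.
  by rewrite (le_lt_trans _ (lt_trans vp1 nau)) // distrC ler_norm.
lra.
Qed.

(* By compactness of [0, c], a single thickening works on all of [0, c]. *)
Lemma barrier_nbhd_avoided_uniform (c : R) : avoids_barrier c ->
  exists n, forall u, 0 <= u <= c -> ~ barrier_nbhd u n (f u).
Proof.
move=> avoid.
have cover := (near_covering_withinP _).2
  ((compact_near_coveringP _).1 (@segment_compact R 0 c)).
have [N _ HN] : \forall n \near \oo,
    `[0, c]%classic `<=` (fun u => ~ barrier_nbhd u n (f u)).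
  apply: cover => u; rewrite /= in_itv /= => /andP[u0 uc].
  apply: filterS (barrier_nbhd_avoided_near u0 (avoid u _)); last by rewrite u0.
  by move=> [v n] /= H; rewrite in_itv /= => /andP[v0 _]; exact: H.
by exists N => u uc; apply: (HN N (leqnn N)); rewrite /= in_itv.
Qed.

(* Conversely, avoiding one thickening at all rational times of [0, c]
   forces the path to avoid the barrier itself, by continuity and density. *)
Lemma avoids_barrier_rat (c : R) (n : nat) :
  (forall q : rat, 0 <= (ratr q : R) <= c -> ~ barrier_nbhd (ratr q) n (f (ratr q))) ->
  avoids_barrier c.
Proof.
move=> Hn u uc; rewrite ltNge; apply/negP => ru.
have n0 : 0 < n.+1%:R^-1 :> R by rewrite invr_gt0.
have [d /= d0 db] := (nbhs_ballP _ _).1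
  (near_continuous_nonneg fcont u (andP uc).1 _ n0).
have dn0 : 0 < Num.min d n.+1%:R^-1 by rewrite lt_min d0 n0.
have [q [qc]] := rat_approx uc dn0.
rewrite lt_min => /andP[uqd uqn]; apply: (Hn q qc); exists (u, f u) => /=.
  by split; rewrite // distrC.
by apply: (db (ratr q)) => //; case/andP: qc.
Qed.

Lemma avoids_barrierE (c : R) : avoids_barrier c <->
  exists n, forall q : rat, 0 <= (ratr q : R) <= c -> ~ barrier_nbhd (ratr q) n (f (ratr q)).
Proof.
split=> [/barrier_nbhd_avoided_uniform[n Hn]|[n]]; last exact: avoids_barrier_rat.
by exists n => q; exact: Hn.
Qed.

End barrier_neighbourhoods.

Lemma bigcap_rat_measurable {d} {T : measurableType d} (D : set rat) (F : rat -> set T) :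
  (forall q, D q -> measurable (F q)) -> measurable (\bigcap_(q in D) F q).
Proof.
move=> mF; rewrite -[X in measurable X]setCK setC_bigcap bigcup_mkcond.
apply/measurableC/bigcupT_measurable_rat => q.
by case: ifPn => // /[!inE] Dq; exact/measurableC/mF.
Qed.

Section root_time_measurability.
Context {R : realType} {d : measure_display} {Omega : measurableType d}
  {X : R -> Omega -> R} {r : \bar R -> \bar R}.
Hypothesis Xmeas : forall t, 0 <= t -> measurable_fun setT (X t).
Hypothesis Xcont : forall w, {within [set t : R | 0 <= t], continuous (X ^~ w)}.
Hypothesis rlsc : lower_semicontinuous r.

Lemma avoids_barrier_measurable (c : R) :
  measurable [set w | avoids_barrier r (X ^~ w) c].
Proof.
have -> : [set w | avoids_barrier r (X ^~ w) c] =
    \bigcup_n \bigcap_(q in [set q : rat | 0 <= (ratr q : R) <= c])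
      X (ratr q) @^-1` ~` barrier_nbhd r (ratr q) n.
  apply/seteqP; split=> w.
    by move=> /(avoids_barrierE _ rlsc _ (Xcont w))[n Hn]; exists n => // q; exact: Hn.
  by move=> [n _ Hn]; apply/(avoids_barrierE _ rlsc _ (Xcont w)); exists n => q; exact: Hn.
apply: bigcupT_measurable => n; apply: bigcap_rat_measurable => q /andP[q0 _].
rewrite -(setTI (_ @^-1` _)); apply: (Xmeas _ q0) => //.
apply: measurableC; apply: open_measurable; exact: open_barrier_nbhd.
Qed.

(* {t <= tau} is measurable: it is the intersection over m of the events
   of avoiding the barrier on [0, t - 1/(m+1)]. *)
Lemma root_time_ge_measurable (t : R) :
  measurable [set w | (t%:E <= root_time X r w)%E].
Proof.
have -> : [set w | (t%:E <= root_time X r w)%E] =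
    \bigcap_m [set w | avoids_barrier r (X ^~ w) (t - m.+1%:R^-1)].
  apply/seteqP; split=> w /=.
    move=> /root_time_geP tw m _ u /andP[u0 ut]; apply: tw; rewrite u0 /=.
    by rewrite (le_lt_trans ut) // ltrBlDr ltrDl invr_gt0.
  move=> Hw; apply/root_time_geP => u /andP[u0 /ltr_add_invr[k ukt]].
  by apply: (Hw k I); rewrite u0 lerBrDr ltW.
by apply: bigcapT_measurable => m; exact: avoids_barrier_measurable.
Qed.

End root_time_measurability.

Section stopped_process.
Context {R : realType} {d : measure_display} {Omega : measurableType d}
  {X : R -> Omega -> R} {r : \bar R -> \bar R} {XT : Omega -> R}.
Local Notation tau := (root_time X r).
Hypothesis XTfin : forall w, (tau w < +oo)%E -> XT w = X (fine (tau w)) w.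

Lemma stopped_after_root_time (t : R) w :
  ~ (t%:E <= tau w)%E -> stopped X tau t w = XT w.
Proof.
move=> /negP tw; rewrite /stopped (negbTE tw) XTfin //.
by apply: lt_trans (ltry t); rewrite ltNge.
Qed.

Lemma stopped_preimage (t : R) (A : set R) :
  [set w | A (stopped X tau t w)] =
  ([set w | t%:E <= tau w]%E `&` X t @^-1` A) `|`
  (~` [set w | t%:E <= tau w]%E `&` XT @^-1` A).
Proof.
apply/seteqP; split=> w /=.
  have [tw|tw] := pselect (t%:E <= tau w)%E.
    by rewrite /stopped tw; left.
  by rewrite stopped_after_root_time //; right.
case=> [[tw Aw]|[tw Aw]]; first by rewrite /stopped tw.
by rewrite stopped_after_root_time.
Qed.

Lemma stopped_preimage_measurable {t : R} {A : set R} :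
  (forall t, 0 <= t -> measurable_fun setT (X t)) ->
  (forall w, {within [set t : R | 0 <= t], continuous (X ^~ w)}) ->
  lower_semicontinuous r -> measurable_fun setT XT -> 0 <= t -> measurable A ->
  measurable [set w | A (stopped X tau t w)].
Proof.
move=> Xmeas Xcont rlsc XTmeas t0 mA; rewrite stopped_preimage.
have mtau := root_time_ge_measurable Xmeas Xcont rlsc t.
apply: measurableU; apply: measurableI.
- exact: mtau.
- by rewrite -(setTI (X t @^-1` A)); exact: Xmeas.
- exact: measurableC.
- by rewrite -(setTI (XT @^-1` A)); exact: XTmeas.
Qed.

Lemma stopped_in_interval {x y t : R} {w : Omega} :
  {within [set t : R | 0 <= t], continuous (X ^~ w)} -> 0 <= t ->
  (r x%:E <= t%:E)%E -> (r y%:E <= t%:E)%E ->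
  (tau w = +oo%E -> X u w @[u --> +oo] --> XT w) ->
  XT w \in `]x, y[ -> stopped X tau t w \in `]x, y[.
Proof.
move=> Xc t0 rx ry XTlim XTw.
have [tw|tw] := pselect (t%:E <= tau w)%E; last by rewrite stopped_after_root_time.
rewrite /stopped tw; move: tw XTlim XTfin.
case E: (tau w) => [f||] tw XTlim; last by have := root_time_ge0 X r w; rewrite E.
  move=> /(_ w); rewrite E ltry => /(_ isT) /= XTf.
  apply: (stays_in_interval X r Xc t0 (_ : t <= f) rx ry).
  - by rewrite -lee_fin.
  - by rewrite -XTf.
  - by rewrite E.
have XTnbhs : nbhs (XT w) `]x, y[%classic.
  by apply: open_nbhs_nbhs; split; [exact: itv_open|exact: XTw].
have [M [_ HM]] := XTlim erefl _ XTnbhs.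
move=> _; pose v := Num.max t (M + 1).
apply: (stays_in_interval X r Xc t0 (_ : t <= v) rx ry); first by rewrite le_max lexx.
  by apply: HM; rewrite lt_max ltrDl ltr01 orbT.
by rewrite E leey.
Qed.

End stopped_process.


Local Open Scope ereal_scope.

Theorem mainTheorem1 (R : realType) (d : measure_display) (Omega : measurableType d)
  (P : probability Omega R)
  (X : R -> Omega -> R) (O : set R) (mu0 mu : probability R R)
  (r : \bar R -> \bar R) (XT : Omega -> R)
  (* standing setting (pathwise/distributional part) *)
  (HPcomplete : measure_is_complete P)
  (HXmeas : forall t, (0 <= t)%R -> measurable_fun setT (X t))
  (HXcont : forall w, {within [set t : R | (0 <= t)%R], continuous (X ^~ w)})
  (HOopen : open O)
  (HXO : forall t w, (0 <= t)%R -> O (X t w))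
  (HX0 : forall A, measurable A -> P (X 0%R @^-1` A) = mu0 A)
  (Hmu0O : mu0 (~` O) = 0) (HmuO : mu (~` O) = 0)
  (Hpot : forall x : R, potential mu x <= potential mu0 x /\ -oo < potential mu x)
  (* r is a Root barrier *)
  (Hr0 : forall z, 0 <= r z) (Hrpinf : r +oo = 0) (Hrninf : r -oo = 0)
  (Hrlsc : lower_semicontinuous r)
  (HXTfin : forall w, root_time X r w < +oo -> XT w = X (fine (root_time X r w)) w)
  (HXTinf : {ae P, forall w, root_time X r w = +oo -> X u w @[u --> +oo%R] --> XT w})
  (HXTmeas : measurable_fun setT XT)
  (HXTlaw : forall A, measurable A -> P (XT @^-1` A) = mu A)
  (HUI : unif_integrable P (stopped X (root_time X r)))
  (* r is regular *)
  (Hreg : forall x : R, potential mu0 x = potential mu x -> r x%:E = 0)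
  (x y s t : R) (Hxy : (x < y)%R) (Hs0 : (0 <= s)%R) (Hst : (s <= t)%R)
  (Hrx : r x%:E <= s%:E) (Hry : r y%:E <= s%:E) :
  (forall vs : Omega -> R,
     [set w | (X (vs w) w \in `]x, y[) /\ (vs w)%:E <= root_time X r w /\ (t <= vs w)%R]
       `<=` [set w | (X s w \in `]x, y[)])
  /\ mu `]x, y[%classic <= mu_t P X (root_time X r) t `]x, y[%classic.
Proof.
split=> [vs w [Xvs [vs_tau t_vs]]|].
  exact: (stays_in_interval X r (HXcont w) Hs0 (le_trans Hst t_vs) Hrx Hry Xvs vs_tau).
have t0 : (0 <= t)%R := le_trans Hs0 Hst.
have rxt : r x%:E <= t%:E by rewrite (le_trans Hrx) // lee_fin.
have ryt : r y%:E <= t%:E by rewrite (le_trans Hry) // lee_fin.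
set I := `]x, y[%classic.
set B := [set w | I (stopped X (root_time X r) t w)].
have mXT : measurable (XT @^-1` I).
  by rewrite -(setTI (XT @^-1` I)); apply: HXTmeas => //; exact: measurable_itv.
have mB : measurable B.
  have := stopped_preimage_measurable HXTfin HXmeas HXcont Hrlsc HXTmeas t0.
  by apply; exact: measurable_itv.
have [N [mN PN0 HN]] := HXTinf.
have XT_B : XT @^-1` I `<=` B `|` N.
  move=> w XTw; have [Nw|Nw] := pselect (N w); [by right|left].
  apply: (stopped_in_interval HXTfin (HXcont w) t0 rxt ryt _ XTw).
  by apply: contrapT => nlim; apply: Nw; apply: HN.
rewrite /mu_t -/I -/B -HXTlaw; last exact: measurable_itv.
rewrite -(measureU0 mB mN PN0).
by apply: le_measure => //; rewrite inE //; exact: measurableU.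
Qed.
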